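(* Let $A$ be a dependent type over a type $\Gamma$ and let $\Sigma A$ be the dependent type over $\Gamma$ defined by $(\Sigma A)\rho:=\Sigma(A\rho)$. Then $\Sigma A$ has a homogeneous composition structure, and if $A$ has a transport structure $t_A$, then $\Sigma A$ has a transport structure; consequently $\Sigma A$ has a composition structure.
   Context: Standing setting: Let $\mathcal{C}$ be the category whose objects are finite sets $I,J,\dots$ of names (from a fixed countable set) and whose morphisms $f\colon J\to I$ are set maps $I\to \mathrm{dM}(J)$, where $\mathrm{dM}(J)$ is the free De Morgan algebra on $J$. We work in the internal extensional type theory (with universes) of the presheaf topos on $\mathcal{C}$. $\mathbb{I}$ denotes the presheaf $J\mapsto \mathrm{dM}(J)$, an internal De Morgan algebra with $0,1,\wedge,\vee$ and involution $r\mapsto 1-r$. $\mathbb{F}$ is the presheaf of cofibrant propositions, with $\mathbb{F}(I)$ the face lattice on $I$ (the distributive lattice generated by formal symbols $(i=0),(i=1)$, $i\in I$, subject to $(i=0)\wedge(i=1)=0_{\mathbb F}$). For $\varphi:\mathbb{F}$, $[\varphi]$ is the associated subsingleton type; when inhabited its unique element is written $\star$. $\Rightarrow$ denotes implication of propositions. A dependent type $A$ over a type $\Gamma$ is a family of types $A\rho$ indexed by $\rho:\Gamma$. A path $\gamma:\Gamma^{\mathbb I}$ is constant on $\varphi$ if $\varphi\Rightarrow \forall(i:\mathbb I).\,\gamma(0)=\gamma(i)$. A fibrancy structure on a type $Y$ is an operation $h$ taking $\varphi:\mathbb F$, $u:[\varphi]\to Y^{\mathbb I}$ and $u_0:Y$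 with $\varphi\Rightarrow u\,\star\,0=u_0$, producing $h\,\varphi\,u\,u_0:Y$ with $\varphi\Rightarrow u\,\star\,1=h\,\varphi\,u\,u_0$. A homogeneous composition structure on $A$ over $\Gamma$ is an element of $\Pi(\rho:\Gamma)$(fibrancy structures on $A\rho$). A composition structure on $A$ is an operation taking $\gamma:\Gamma^{\mathbb I}$, $\varphi:\mathbb F$, $u:[\varphi]\to\Pi(i:\mathbb I)A\gamma(i)$ and $u_0:A\gamma(0)$ with $\varphi\Rightarrow u\,\star\,0=u_0$, producing an element $v:A\gamma(1)$ with $\varphi\Rightarrow u\,\star\,1=v$. A transport structure $t_A$ on $A$ is an operation taking $\gamma:\Gamma^{\mathbb I}$, $\varphi:\mathbb F$ with $\gamma$ constant on $\varphi$, and $u_0:A\gamma(0)$, producing $t_A\,\gamma\,\varphi\,u_0:A\gamma(1)$ with $\varphi\Rightarrow u_0=t_A\,\gamma\,\varphi\,u_0$. A map $\alpha:A\to B$ between types with fibrancy structures is fibrancy preserving if $\alpha(h_A\,\varphi\,u\,u_0)=h_B\,\varphi\,(\lambda x\,i.\,\alpha(u\,x\,i))\,(\alpha\,u_0)$. For a type $X$, a $\Sigma X$-algebra is a tuple $(B,h_B,n_B,s_B,l_B)$ with $h_B$ a fibrancy structure on $B$, $n_B,s_B:B$, $l_B:X\to B^{\mathbb I}$ with $l_B\,x\,0=n_B$, $l_B\,x\,1=s_B$; maps of $\Sigma X$-algebras are fibrancy preserving maps preserving $n,s,l$. $\Sigma X$ (with structure $\mathsf{hcomp},\mathsf N,\mathsf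 S,\mathsf{merid}$) denotes the initial $\Sigma X$-algebra, which exists in this presheaf topos. *)

(* We work axiomatically in the internal
   extensional type theory of the presheaf topos on the cube category C:
   Rocq's types play the role of internal types, and the interval I, the
   cofibrant propositions F and the suspension HIT are given as abstract
   structures satisfying the properties they have in the topos. *)
Set Implicit Arguments.

Record CubeStr := {
  I : Type;
  i0 : I; i1 : I;
  imeet : I -> I -> I;
  ijoin : I -> I -> I;
  ineg  : I -> I;
  imeet_assoc : forall a b c, imeet a (imeet b c) = imeet (imeet a b) c;
  ijoin_assoc : forall a b c, ijoin a (ijoin b c) = ijoin (ijoin a b) c;
  imeet_comm : forall a b, imeet a b = imeet b a;
  ijoin_comm : forall a b, ijoin a b = ijoin b a;
  imeet_absorb : forall a b, imeet a (ijoin a b) = a;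
  ijoin_absorb : forall a b, ijoin a (imeet a b) = a;
  imeet_distr : forall a b c, imeet a (ijoin b c) = ijoin (imeet a b) (imeet a c);
  ijoin_i0 : forall a, ijoin a i0 = a;
  imeet_i1 : forall a, imeet a i1 = a;
  ineg_invol : forall a, ineg (ineg a) = a;
  ineg_meet : forall a b, ineg (imeet a b) = ijoin (ineg a) (ineg b);
  ineg_i0 : ineg i0 = i1;
  F : Type;
  cof : F -> Prop;
  ftop : F; fbot : F;
  fand : F -> F -> F; for_ : F -> F -> F;
  feq0 : I -> F;
  feq1 : I -> F;
  cof_top : cof ftop;
  cof_bot : ~ cof fbot;
  cof_and : forall a b, cof (fand a b) <-> cof a /\ cof b;
  cof_or  : forall a b, cof (for_ a b) <-> cof a \/ cof b;
  cof_eq0 : forall i, cof (feq0 i) <-> i = i0;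
  cof_eq1 : forall i, cof (feq1 i) <-> i = i1
}.

Section Structures.
Variable C : CubeStr.

Definition FibStr (Y : Type) : Type :=
  forall (phi : F C) (u : cof C phi -> I C -> Y) (u0 : Y),
    (forall p : cof C phi, u p (i0 C) = u0) ->
    { v : Y | forall p : cof C phi, u p (i1 C) = v }.

Definition HCompStr (Gamma : Type) (A : Gamma -> Type) : Type :=
  forall rho : Gamma, FibStr (A rho).

Definition CompStr (Gamma : Type) (A : Gamma -> Type) : Type :=
  forall (gamma : I C -> Gamma) (phi : F C)
         (u : cof C phi -> forall i : I C, A (gamma i)) (u0 : A (gamma (i0 C))),
    (forall p : cof C phi, u p (i0 C) = u0) ->
    { v : A (gamma (i1 C)) | forall p : cof C phi, u p (i1 C) = v }.

Definition ConstOn (Gamma : Type) (gamma : I C -> Gamma) (phi : F C) : Prop :=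
  cof C phi -> forall i : I C, gamma (i0 C) = gamma i.

(** The equation  u0 = t gamma phi u0  (under phi) is
    well typed in extensional type theory since gamma 0 = gamma 1 under phi;
    here the identification is made explicit by the cast along that equality. *)
Definition TransportStr (Gamma : Type) (A : Gamma -> Type) : Type :=
  forall (gamma : I C -> Gamma) (phi : F C) (c : ConstOn gamma phi)
         (u0 : A (gamma (i0 C))),
    { v : A (gamma (i1 C)) |
      forall p : cof C phi, eq_rect (gamma (i0 C)) A u0 (gamma (i1 C)) (c p (i1 C)) = v }.

Record SuspAlg (X : Type) := {
  sa_car : Type;
  sa_h : FibStr sa_car;
  sa_n : sa_car;
  sa_s : sa_car;
  sa_l : X -> I C -> sa_car;
  sa_l0 : forall x, sa_l x (i0 C) = sa_n;
  sa_l1 : forall x, sa_l x (i1 C) = sa_s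
}.

Definition FibPreserving (Y Z : Type) (hY : FibStr Y) (hZ : FibStr Z)
  (alpha : Y -> Z) : Prop :=
  forall (phi : F C) (u : cof C phi -> I C -> Y) (u0 : Y)
         (e : forall p : cof C phi, u p (i0 C) = u0),
    alpha (proj1_sig (hY phi u u0 e)) =
    proj1_sig (hZ phi (fun p i => alpha (u p i)) (alpha u0)
                  (fun p => f_equal alpha (e p))).

Definition SuspHom (X : Type) (A B : SuspAlg X) (f : sa_car A -> sa_car B) : Prop :=
  FibPreserving (sa_h A) (sa_h B) f /\
  f (sa_n A) = sa_n B /\ f (sa_s A) = sa_s B /\
  (forall x i, f (sa_l A x i) = sa_l B x i).

Definition IsInitialSusp (X : Type) (A : SuspAlg X) : Type :=
  forall B : SuspAlg X,
    { f : sa_car A -> sa_car B |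
      SuspHom A B f /\ forall g, SuspHom A B g -> forall y, g y = f y }.

End Structures.

From Stdlib Require Import ProofIrrelevance.

(* The suspension of each fibre carries the fibrancy structure of the initial
   algebra, which is already a homogeneous composition structure on Sigma A.
   Transport t : A(gamma 0) -> A(gamma 1) induces, by initiality, an algebra
   map Sigma(A(gamma 0)) -> Sigma(A(gamma 1)); where gamma is constant t is
   the identity cast, the cast of suspensions is itself such an
   algebra map, and uniqueness identifies the two.  Composition follows
   from homogeneous composition and transport in the usual way: transport every
   u p i from gamma i to gamma 1 along j |-> gamma (i \/ j), which is constant
   on (i = 1), and compose homogeneously in the fibre over gamma 1. *)

Lemma eq_rect_loop (T : Type) (P : T -> Type) (x : T) (e : x = x) (a : P x) :
  eq_rect x P a x e = a.
Proof. now rewrite (proof_irrelevance _ e eq_refl). Qed.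

Lemma ijoin_i1 (C : CubeStr) (i : I C) : ijoin C i (i1 C) = i1 C.
Proof.
  rewrite ijoin_comm, <- (imeet_i1 C i), imeet_comm. apply ijoin_absorb.
Qed.

Lemma ijoin_i1l (C : CubeStr) (j : I C) : ijoin C (i1 C) j = i1 C.
Proof. rewrite ijoin_comm. apply ijoin_i1. Qed.

Section CompFromTransport.
Variables (C : CubeStr) (Gamma : Type) (B : Gamma -> Type).

Definition const_on_ijoin (gamma : I C -> Gamma) (i : I C) :
  ConstOn C (fun j => gamma (ijoin C i j)) (feq1 C i).
Proof.
  intros q j. apply cof_eq1 in q. subst i. now rewrite !ijoin_i1l.
Defined.

(* The casts account for [i \/ 0 = i] and [i \/ 1 = 1], which hold only propositionally. *)
Definition transport_to_i1 (tr : TransportStr C B) (gamma : I C -> Gamma) (i : I C)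
  (a : B (gamma i)) : B (gamma (i1 C)) :=
  eq_rect _ B
    (proj1_sig (tr (fun j => gamma (ijoin C i j)) (feq1 C i) (const_on_ijoin gamma i)
       (eq_rect _ B a _ (f_equal gamma (eq_sym (ijoin_i0 C i))))))
    _ (f_equal gamma (ijoin_i1 C i)).

Lemma transport_to_i1_i1 tr gamma (a : B (gamma (i1 C))) :
  transport_to_i1 tr gamma (i1 C) a = a.
Proof.
  unfold transport_to_i1.
  destruct (tr _ _ _ _) as [v Hv]; simpl.
  assert (q : cof C (feq1 C (i1 C))) by now apply cof_eq1.
  rewrite <- (Hv q), !rew_compose. apply eq_rect_loop.
Qed.

Definition comp_of_hcomp_transport (hc : HCompStr C B) (tr : TransportStr C B) :
  CompStr C B.
Proof.
  intros gamma phi u u0 e.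
  pose (T := transport_to_i1 tr gamma).
  exists (proj1_sig (hc (gamma (i1 C)) phi (fun p i => T i (u p i)) (T (i0 C) u0)
            (fun p => f_equal (T (i0 C)) (e p)))).
  intros p. destruct (hc _ _ _ _ _) as [v Hv]; simpl.
  rewrite <- (Hv p). symmetry. apply transport_to_i1_i1.
Defined.

End CompFromTransport.

Section SuspTransport.
Variables (C : CubeStr) (Susp : forall X : Type, SuspAlg C X).

Definition susp_alg_along (X Y : Type) (t : X -> Y) : SuspAlg C X :=
  {| sa_car := sa_car (Susp Y); sa_h := sa_h (Susp Y);
     sa_n := sa_n (Susp Y); sa_s := sa_s (Susp Y);
     sa_l := fun x => sa_l (Susp Y) (t x);
     sa_l0 := fun x => sa_l0 (Susp Y) (t x);
     sa_l1 := fun x => sa_l1 (Susp Y) (t x) |}.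

Lemma eq_rect_susp_hom (Gamma : Type) (A : Gamma -> Type) (x y : Gamma) (e : x = y)
  (t : A x -> A y) (Ht : forall a, eq_rect x A a y e = t a) :
  SuspHom (Susp (A x)) (susp_alg_along (A x) (A y) t)
    (fun s => eq_rect x (fun r => sa_car (Susp (A r))) s y e).
Proof.
  destruct e; simpl in Ht.
  split; [| split; [| split]]; simpl; try reflexivity.
  - intros phi u u0 e0. do 2 f_equal. apply proof_irrelevance.
  - intros a i. now rewrite <- Ht.
Qed.

Definition susp_transport (Susp_initial : forall X : Type, IsInitialSusp (Susp X))
  (Gamma : Type) (A : Gamma -> Type) (tA : TransportStr C A) :
  TransportStr C (fun rho => sa_car (Susp (A rho))).
Proof.
  intros gamma phi c s0.
  pose (t := fun a => proj1_sig (tA gamma phi c a)).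
  destruct (Susp_initial _ (susp_alg_along _ _ t)) as [f [_ Hunique]].
  exists (f s0). intros p.
  apply (Hunique _ (@eq_rect_susp_hom _ A _ _ (c p (i1 C)) t
                       (fun a => proj2_sig (tA gamma phi c a) p))).
Defined.

End SuspTransport.

Theorem mainTheorem7 (C : CubeStr)
  (Susp : forall X : Type, SuspAlg C X)
  (Susp_initial : forall X : Type, IsInitialSusp (Susp X))
  (Gamma : Type) (A : Gamma -> Type) :
  inhabited (HCompStr C (fun rho => sa_car (Susp (A rho)))) /\
  (forall tA : TransportStr C A,
     inhabited (TransportStr C (fun rho => sa_car (Susp (A rho)))) /\
     inhabited (CompStr C (fun rho => sa_car (Susp (A rho))))).
Proof.
  pose (hc := fun rho => sa_h (Susp (A rho)) : FibStr C (sa_car (Susp (A rho)))).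
  split; [exact (inhabits hc) |].
  intros tA.
  pose (tr := @susp_transport C Susp Susp_initial _ A tA).
  split; [exact (inhabits tr) | exact (inhabits (@comp_of_hcomp_transport C _ _ hc tr))].
Qed.
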